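(* Let $x$ be fixed observed data and let $p(x,z)$, $z\in\mathbb{R}^d$, be a positive, differentiable joint density (in $z$). Let $K\ge 1$, $n\in\{1,\dots,K\}$, and let $q$ be a probability density on $\mathbb{R}^d$ with finite second moment. Set $w(z):=p(x,z)/q(z)$. For a probability density $q_n$ on $\mathbb{R}^d$ with finite second moment define $$\mathcal{F}_n(q_n):=\mathbb{E}_{z_n\sim q_n}\Big[\mathbb{E}_{\{z_i\}_{i\neq n}\overset{i.i.d.}{\sim} q}\log\Big(\frac1K\frac{p(x,z_n)}{q_n(z_n)}+\frac1K\sum_{i\neq n}\frac{p(x,z_i)}{q(z_i)}\Big)\Big].$$ Suppose standard regularity conditions hold that allow interchanging derivatives (in $\epsilon$ and in $z$) with expectations/integrals. Then the Wasserstein gradient of $\mathcal{F}_n$ at $q_n=q$ is the map $\mathbb{R}^d\to\mathbb{R}^d$ given by $$\nabla^W[\mathcal{F}_n(q)](z_n)=\mathbb{E}_{\{z_i\}_{i\neq n}\overset{i.i.d.}{\sim} q}\left[\left(\frac{w(z_n)}{\sum_{i=1}^K w(z_i)}\right)^2\nabla_{z_n}\log w(z_n)\right].$$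
   Context: For a functional $\mathcal{F}$ on the space $\mathcal{P}_2(\mathbb{R}^d)$ of probability measures with finite second moment, the first variation at $\mu$ is a function $\frac{\delta\mathcal{F}(\mu)}{\delta\mu}:\mathbb{R}^d\to\mathbb{R}$ such that $\lim_{\epsilon\to0^+}\frac{\mathcal{F}(\mu+\epsilon\nu)-\mathcal{F}(\mu)}{\epsilon}=\int\frac{\delta\mathcal{F}(\mu)}{\delta\mu}(x)\,\nu(dx)$ for all signed measures $\nu$ with $\mu+\epsilon\nu\in\mathcal{P}_2(\mathbb{R}^d)$ for small $\epsilon>0$. The Wasserstein gradient is $[\nabla^W\mathcal{F}(\mu)](x):=\nabla_x\frac{\delta\mathcal{F}(\mu)}{\delta\mu}(x)$. In the displayed formula, $z_n$ is the point of evaluation and $z_i$, $i\ne n$, are integrated out. *)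

From HB Require Import structures.
From mathcomp Require Import all_boot all_order all_algebra.
From mathcomp Require Import all_classical all_reals all_analysis.
Set Implicit Arguments. Unset Strict Implicit. Unset Printing Implicit Defensive.
Import Order.TTheory GRing.Theory Num.Theory.
Import numFieldNormedType.Exports.
Local Open Scope classical_set_scope.
Local Open Scope ring_scope.

Section defs.
Variables (R : realType) (d : nat).

Definition Rd := g_sigma_algebraType (@open 'rV[R]_d).

(* mu is Lebesgue measure on R^d: the Borel measure giving every closed
   box its volume (this characterizes Lebesgue measure on Borel sets). *)
Definition is_lebesgue_Rd (mu : {measure set Rd -> \bar R}) : Prop :=
  forall a b : 'rV[R]_d, (forall i, a 0 i <= b 0 i) ->
    mu [set x : Rd | forall i, a 0 i <= x 0 i <= b 0 i] =
    (\prod_(i < d) (b 0 i - a 0 i))%:E.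

Variable mu : {measure set Rd -> \bar R}.

Definition is_P2_density (f : 'rV[R]_d -> R) : Prop :=
  [/\ measurable_fun [set: Rd] f,
      (forall z, 0 <= f z),
      (\int[mu]_z (f z)%:E = 1)%E &
      mu.-integrable [set: Rd] (fun z => (f z * `|z| ^+ 2)%:E)].

Definition grad (f : 'rV[R]_d -> R) (z : 'rV[R]_d) : 'rV[R]_d :=
  \row_(j < d) 'D_(delta_mx 0 j) f z.

Fixpoint iid_exp (q : 'rV[R]_d -> R) (m : nat) (f : seq 'rV[R]_d -> R) : R :=
  match m with
  | 0 => f [::]
  | m'.+1 => Rintegral mu [set: Rd]
               (fun z : 'rV[R]_d => q z * iid_exp q m' (fun s => f (z :: s)))
  end.

(* A first variation of the functional F at the density q0
   (perturbations nu = h * mu by signed densities h such that q0 + eps h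
   is a P2 density for all small eps > 0). *)
Definition is_first_variation (F : ('rV[R]_d -> R) -> R)
    (q0 : 'rV[R]_d -> R) (V : 'rV[R]_d -> R) : Prop :=
  forall h : 'rV[R]_d -> R, measurable_fun [set: Rd] h ->
    (exists2 e0 : R, 0 < e0 &
       forall e : R, 0 < e < e0 -> is_P2_density (fun z => q0 z + e * h z)) ->
    (fun e : R => (F (fun z => q0 z + e * h z) - F q0) / e) @ 0^'+ -->
      Rintegral mu [set: Rd] (fun z => V z * h z).

End defs.

(* z_n at position n, the other K-1 samples (listed in s, in order) at the
   remaining positions i <> n. *)
Definition ins {R : realType} {d K : nat} (n : 'I_K) (zn : 'rV[R]_d)
    (s : seq 'rV[R]_d) (i : 'I_K) : 'rV[R]_d :=
  if (i < n)%N then nth zn s i else if i == n then zn else nth zn s i.-1.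

Definition Fint {R : realType} {d : nat} (p q : 'rV[R]_d -> R) (K : nat)
    (n : 'I_K) (qn : 'rV[R]_d -> R) (zn : 'rV[R]_d) (s : seq 'rV[R]_d) : R :=
  ln (K%:R^-1 * (p zn / qn zn) +
      K%:R^-1 * \sum_(i < K | i != n) p (ins n zn s i) / q (ins n zn s i)).

Definition Fn {R : realType} {d : nat} (mu : {measure set Rd R d -> \bar R})
    (p q : 'rV[R]_d -> R) (K : nat) (n : 'I_K) (qn : 'rV[R]_d -> R) : R :=
  Rintegral mu [set: Rd R d]
    (fun zn : 'rV[R]_d => qn zn * iid_exp mu q K.-1 (Fint p q n qn zn)).

From HB Require Import structures.
From mathcomp Require Import all_boot all_order all_algebra.
From mathcomp Require Import all_classical all_reals all_analysis.
From mathcomp Require Import ring lra zify.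
Import Order.TTheory GRing.Theory Num.Theory.
Import numFieldNormedType.Exports.
Local Open Scope classical_set_scope.
Local Open Scope ring_scope.

(* With c = 1/K, w = p/q and S the sum of the weights w z_i over i <> n, the
   integrand of F_n at (z_n, (z_i)) is phi (q_n z_n) with
   phi t = t ln (c p z_n / t + c S): F_n is local in q_n.  Differentiating
   along q + e h at e = 0 gives the first variation V z = E[phi' (q z)], where
   phi' (q z) = ln (c w z + c S) - c w z / (c w z + c S).  As S does not
   depend on z, the gradient of this is (w z / (w z + S))^2 grad w z / w z,
   and w z + S is the sum of all K weights.  The regularity hypotheses move
   both derivatives inside the expectations. *)

Section integral_scaling.
Context {d} {T : measurableType d} {R : realType} (mu : {measure set T -> \bar R}).
Import HBNNSimple.

(* Unlike [ge0_integralZl_EFin], no measurability is needed: the integral is a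
   supremum over simple minorants, and scaling by [k] maps the simple
   minorants of [g] onto those of [k * g]. *)
Lemma ge0_integralZl_any (g : T -> \bar R) (k : R) :
  (forall x, 0 <= g x)%E -> 0 < k ->
  (\int[mu]_x (k%:E * g x) = k%:E * \int[mu]_x g x)%E.
Proof.
move=> g_ge0 k_gt0.
rewrite !ge0_integralTE //; last by move=> x; rewrite mule_ge0 // lee_fin ltW.
rewrite -ereal_sup_pZl //; congr ereal_sup; apply/seteqP; split.
- move=> _ [h /= h_le <-].
  have kV_ge0 : (0 <= k^-1)%R by rewrite invr_ge0 ltW.
  exists (sintegral mu (scale_nnsfun h kV_ge0)).
    exists (scale_nnsfun h kV_ge0) => //= x.
    have := h_le x; have := g_ge0 x; case: (g x) => [r||] //=.
      by rewrite -EFinM !lee_fin => _ hr; rewrite ler_pdivrMl.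
    by move=> _ _; rewrite leey.
  rewrite -sintegralrM.
  by apply: eq_sintegral => x /=; rewrite mulrA mulfV ?mul1r // gt_eqF.
- move=> _ [_ [h /= h_le <-] <-].
  exists (scale_nnsfun h (ltW k_gt0)).
    move=> x /=; have := h_le x; have := g_ge0 x; case: (g x) => [r||] //=.
      by rewrite -EFinM !lee_fin => _ hr; rewrite ler_pM2l.
    by move=> _ _; rewrite gt0_muley ?lte_fin // leey.
  by rewrite -sintegralrM (_ : (_ \* _)%R = scale_nnsfun h (ltW k_gt0)).
Qed.

Lemma RintegralN_any (f : T -> R) :
  Rintegral mu setT (fun x => - f x) = - Rintegral mu setT f.
Proof.
rewrite /Rintegral integralE [in RHS]integralE.
rewrite (_ : (fun x => (- f x)%:E) = (\- (fun x => (f x)%:E))%E) // funeposN funenegN.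
have /(_ setT) := integral_ge0 mu (fun x _ => funepos_ge0 (fun x => (f x)%:E) x).
have /(_ setT) := integral_ge0 mu (fun x _ => funeneg_ge0 (fun x => (f x)%:E) x).
move: (\int[mu]_x _)%E (\int[mu]_x _)%E => [a||] [b||] //= _ _.
all: by rewrite ?oppr0 // opprB.
Qed.

Lemma gt0_RintegralZl_any (f : T -> R) (k : R) : 0 < k ->
  Rintegral mu setT (fun x => k * f x) = k * Rintegral mu setT f.
Proof.
move=> k_gt0; rewrite /Rintegral integralE [in RHS]integralE.
rewrite (_ : (fun x => (k * f x)%:E) = fun x => (k%:E * (f x)%:E)%E) //.
rewrite ge0_funeposM ?ge0_funenegM ?ltW // !ge0_integralZl_any //.
have /(_ setT) := integral_ge0 mu (fun x _ => funepos_ge0 (fun x => (f x)%:E) x).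
have /(_ setT) := integral_ge0 mu (fun x _ => funeneg_ge0 (fun x => (f x)%:E) x).
move: (\int[mu]_x _)%E (\int[mu]_x _)%E => [a||] [b||] //= _ _.
all: by rewrite ?mulrBr ?gt0_muley ?lte_fin //= mulr0.
Qed.

(* No integrability is needed: when the positive or negative part has an
   infinite integral, [fine] makes both sides 0. *)
Lemma RintegralZl_any (f : T -> R) (k : R) :
  Rintegral mu setT (fun x => k * f x) = k * Rintegral mu setT f.
Proof.
case: (ltgtP k 0) => [k_lt0|k_gt0|->]; last first.
- by rewrite mul0r (_ : (fun x => 0 * f x) = cst 0) ?Rintegral_cst ?mul0r //;
    apply/funext => x; rewrite mul0r.
- exact: gt0_RintegralZl_any.
rewrite -[k]opprK; under eq_fun do rewrite mulNr.
by rewrite RintegralN_any gt0_RintegralZl_any ?oppr_gt0 // !mulNr.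
Qed.

End integral_scaling.

Section directional_derivative_comp.
Context {R : realType} {V : normedModType R}.
Implicit Types (f : V -> R) (x v : V).

Lemma is_derive_comp {f} {g : R -> R} {x v df dg} :
  is_derive x v f df -> is_derive (f x) 1 g dg -> is_derive x v (g \o f) (dg * df).
Proof.
move=> [fxv <-] [gfx <-].
pose fv := fun h : R => f (h *: v + x).
have deriveEline (k : V -> R) : 'D_v k x = 'D_1 (fun h : R => k (h *: v + x)) 0.
  rewrite /derive; set l := fun h => h^-1 *: _; set r := fun h => h^-1 *: _.
  suff -> : l = r by [].
  by apply/funext => h; rewrite /l /r /= addr0 scale0r add0r [_%:A]mulr1.
have fv_der : derivable fv 0 1 by exact: (derivable1P f x v).1 fxv.
have fv0 : fv 0 = f x by rewrite /fv scale0r add0r.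
have g_der : derivable g (fv 0) 1 by rewrite fv0.
split.
- apply/derivable1P/derivable1_diffP.
  by apply: (@differentiable_comp _ _ _ _ fv g); exact/derivable1_diffP.
- rewrite deriveEline -derive1E (derive1_comp fv_der g_der).
  by rewrite fv0 !derive1E -deriveEline.
Qed.

Lemma is_derive_ln_comp {f x v df} :
  0 < f x -> is_derive x v f df -> is_derive x v (fun y => ln (f y)) (df / f x).
Proof.
move=> fx_gt0 fd; rewrite mulrC; exact: is_derive_comp fd (is_derive1_ln fx_gt0).
Qed.

Lemma is_derive_inv_comp {f x v df} :
  f x != 0 -> is_derive x v f df -> is_derive x v (fun y => (f y)^-1) (- (f x) ^- 2 * df).
Proof.
move=> fx_neq0 [fxv <-]; split; first exact: derivableV.
exact: deriveV.
Qed.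

End directional_derivative_comp.

Lemma derive1_comp_line {R : realType} (phi : R -> R) (a b dphi : R) :
  is_derive a 1 phi dphi -> derive1 (fun e => phi (a + e * b)) 0 = b * dphi.
Proof.
move=> phid.
have lined : is_derive (0 : R) 1 (fun e : R => a + e * b) b.
  have := is_deriveD (is_derive_cst a (0 : R) (1 : R))
    (is_deriveM (is_derive_id (0 : R) (1 : R)) (is_derive_cst b (0 : R) (1 : R))).
  by rewrite /= scaler0 !add0r [_ *: 1]mulr1; apply.
have phid0 : is_derive (a + 0 * b) 1 phi dphi by rewrite mul0r addr0.
have := @is_derive1_comp _ phi (fun e => a + e * b) 0 _ _ phid0 lined.
by rewrite derive1E mulrC; case=> _ <-.
Qed.

Section log_weight_derivatives.
Context {R : realType}.

Lemma is_derive_ln_sub_ratio {V : normedModType R} {f : V -> R} {x v df} {c T : R} :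
  0 < c -> 0 <= T -> 0 < f x -> is_derive x v f df ->
  is_derive x v (fun y => ln (c * f y + c * T) - c * f y / (c * f y + c * T))
    ((f x / (f x + T)) ^+ 2 * (df / f x)).
Proof.
move=> c_gt0 T_ge0 fx_gt0 fd.
pose A y := c * f y + c * T.
have A_der : is_derive x v A (c * df).
  have := is_deriveD (is_deriveM (is_derive_cst c x v) fd) (is_derive_cst (c * T) x v).
  by rewrite /= scaler0 !addr0; apply.
have Ax_gt0 : 0 < A x by rewrite /A -mulrDr mulr_gt0 // ltr_wpDr.
have := is_deriveB (is_derive_ln_comp Ax_gt0 A_der)
  (is_deriveM (is_deriveM (is_derive_cst c x v) fd)
              (is_derive_inv_comp (lt0r_neq0 Ax_gt0) A_der)).
move=> /is_derive_eq; apply; rewrite /A /=.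
have fT_gt0 : 0 < f x + T by rewrite ltr_wpDr.
rewrite scaler0 addr0 /GRing.scale /= !fctE.
field; rewrite !gt_eqF ?mulr_gt0 //.
Qed.

Lemma is_derive_mul_ln_ratio (c P S t : R) : 0 < c -> 0 < P -> 0 <= S -> 0 < t ->
  is_derive t 1 (fun t => t * ln (c * (P / t) + c * S))
    (ln (c * (P / t) + c * S) - c * (P / t) / (c * (P / t) + c * S)).
Proof.
move=> c_gt0 P_gt0 S_ge0 t_gt0.
pose A u := c * (P / u) + c * S.
have A_der : is_derive t 1 A (c * (P * (- t ^- 2 * 1))).
  have := is_deriveD (is_deriveM (is_derive_cst c t 1)
     (is_deriveM (is_derive_cst P t 1) (is_derive_inv_comp (lt0r_neq0 t_gt0) (is_derive_id t 1))))
     (is_derive_cst (c * S) t 1).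
  by rewrite /= !scaler0 !addr0; apply.
have At_gt0 : 0 < A t.
  by apply: ltr_wpDr; rewrite ?pmulr_rge0 ?pmulr_rgt0 ?divr_gt0 ?invr_gt0.
have := is_deriveM (is_derive_id t 1) (is_derive_ln_comp At_gt0 A_der).
move=> /is_derive_eq; apply; rewrite /A /=.
rewrite /GRing.scale /= mulr1.
have cP_gt0 : 0 < c * P := mulr_gt0 c_gt0 P_gt0.
have cSt_ge0 : 0 <= c * S * t := mulr_ge0 (mulr_ge0 (ltW c_gt0) S_ge0) (ltW t_gt0).
by field; rewrite !gt_eqF //; lra.
Qed.

End log_weight_derivatives.

Section iid_exp_theory.
Context {R : realType} {d : nat} (mu : {measure set Rd R d -> \bar R}) (q : 'rV[R]_d -> R).

Lemma eq_iid_exp m (f g : seq 'rV[R]_d -> R) :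
  (forall s, size s = m -> f s = g s) -> iid_exp mu q m f = iid_exp mu q m g.
Proof.
elim: m f g => [|m IHm] f g fg /=; first exact: fg.
congr Rintegral; apply/funext => z; congr (_ * _).
by apply: IHm => s s_size; apply: fg; rewrite /= s_size.
Qed.

Lemma iid_expZl m (f : seq 'rV[R]_d -> R) k :
  iid_exp mu q m (fun s => k * f s) = k * iid_exp mu q m f.
Proof.
elim: m f => [|m IHm] f //=.
rewrite -RintegralZl_any; congr Rintegral; apply/funext => z.
by rewrite (IHm (fun s => f (z :: s))) mulrCA.
Qed.

End iid_exp_theory.

Section sample_insertion.
Context {R : realType} {d K : nat} (n : 'I_K).

Lemma ins_at (z : 'rV[R]_d) s : ins n z s n = z.
Proof. by rewrite /ins ltnn eqxx. Qed.

Lemma ins_neq (y z : 'rV[R]_d) {s i} :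
  size s = K.-1 -> i != n -> ins n y s i = ins n z s i.
Proof.
move=> s_size i_neq_n; have := ltn_ord i; have := ltn_ord n; rewrite /ins.
case: ifP => i_lt_n n_lt_K i_lt_K.
  by apply: set_nth_default; rewrite s_size; lia.
rewrite (negbTE i_neq_n); apply: set_nth_default; rewrite s_size.
have : (n < i)%N by rewrite ltn_neqAle eq_sym i_neq_n leqNgt i_lt_n.
lia.
Qed.

End sample_insertion.

Section importance_weights.
Context {R : realType} {d K : nat} (n : 'I_K) (p q : 'rV[R]_d -> R).
Hypotheses (p_gt0 : forall z, 0 < p z) (q_gt0 : forall z, 0 < q z).

Local Notation c := (K%:R^-1 : R).

Let c_gt0 : 0 < c.
Proof. by rewrite invr_gt0 ltr0n (leq_ltn_trans (leq0n n) (ltn_ord n)). Qed.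

Definition weight_others (z : 'rV[R]_d) s :=
  \sum_(i < K | i != n) p (ins n z s i) / q (ins n z s i).

Lemma weight_others_ge0 z s : 0 <= weight_others z s.
Proof. by apply: sumr_ge0 => i _; rewrite divr_ge0 // ltW. Qed.

Lemma weight_others_indep y z s :
  size s = K.-1 -> weight_others y s = weight_others z s.
Proof. by move=> s_size; apply: eq_bigr => i /(ins_neq n y z s_size) ->. Qed.

Lemma sum_weights_ins z s :
  \sum_(i < K) p (ins n z s i) / q (ins n z s i) = p z / q z + weight_others z s.
Proof. by rewrite (bigD1 n) //= ins_at. Qed.

Definition local_integrand z s (t : R) := t * Fint p q n (fun _ => t) z s.

Definition first_variation_integrand z s := derive1 (local_integrand z s) (q z).

Lemma is_derive_local_integrand (z : 'rV[R]_d) s (t : R) : 0 < t ->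
  is_derive t 1 (local_integrand z s)
    (ln (c * (p z / t) + c * weight_others z s)
     - c * (p z / t) / (c * (p z / t) + c * weight_others z s)).
Proof. by move=> t_gt0; apply: is_derive_mul_ln_ratio; rewrite ?weight_others_ge0. Qed.

Lemma derive1_Fint_line z s (h : 'rV[R]_d -> R) :
  derive1 (fun e => (q z + e * h z) * Fint p q n (fun y => q y + e * h y) z s) 0
  = h z * first_variation_integrand z s.
Proof.
have phid := is_derive_local_integrand z s _ (q_gt0 z).
rewrite (derive1_comp_line (local_integrand z s) (q z) (h z) _ phid).
rewrite /first_variation_integrand derive1E.
by case: phid => _ ->.
Qed.

Lemma derive_first_variation_integrand (v z : 'rV[R]_d) s :
  size s = K.-1 -> differentiable p z -> differentiable q z ->
  'D_v (first_variation_integrand ^~ s) z =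
  (p z / q z / \sum_(i < K) p (ins n z s i) / q (ins n z s i)) ^+ 2
  * 'D_v (fun y => ln (p y / q y)) z.
Proof.
move=> s_size dp dq.
pose w y := p y / q y.
have wz_gt0 : 0 < w z by rewrite divr_gt0.
have p_der : is_derive z v p ('D_v p z) by apply/derivableP/diff_derivable.
have q_der : is_derive z v q ('D_v q z) by apply/derivableP/diff_derivable.
have [dw w_der] : exists dw, is_derive z v w dw.
  by eexists; exact: is_deriveM p_der (is_derive_inv_comp (lt0r_neq0 (q_gt0 z)) q_der).
have -> : first_variation_integrand ^~ s =
    fun y => ln (c * w y + c * weight_others z s)
             - c * w y / (c * w y + c * weight_others z s).
  apply/funext => y; rewrite /first_variation_integrand derive1E.
  rewrite -(weight_others_indep y z s s_size).
  by have [_ ->] := is_derive_local_integrand y s _ (q_gt0 y).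
rewrite sum_weights_ins.
have [_ ->] := is_derive_ln_sub_ratio c_gt0 (weight_others_ge0 z s) wz_gt0 w_der.
by have [_ ->] := is_derive_ln_comp wz_gt0 w_der.
Qed.

End importance_weights.

Theorem proposition1 (R : realType) (d : nat)
    (mu : {measure set Rd R d -> \bar R})
    (p q : 'rV[R]_d -> R) (K : nat) (n : 'I_K) :
  is_lebesgue_Rd mu ->
  (forall z, 0 < p z) -> (forall z, differentiable p z) ->
  is_P2_density mu q -> (forall z, 0 < q z) -> (forall z, differentiable q z) ->
  (* regularity: d/d(eps) commutes with the expectations defining F_n *)
  (forall h : 'rV[R]_d -> R, measurable_fun [set: Rd R d] h ->
     (exists2 e0 : R, 0 < e0 &
        forall e : R, 0 < e < e0 -> is_P2_density mu (fun z => q z + e * h z)) ->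
     (fun e : R => (Fn mu p q n (fun z => q z + e * h z) - Fn mu p q n q) / e)
       @ 0^'+ -->
     Rintegral mu [set: Rd R d] (fun z : 'rV[R]_d =>
       iid_exp mu q K.-1 (fun s =>
         derive1 (fun e : R => (q z + e * h z) * Fint p q n (fun y => q y + e * h y) z s) 0))) ->
  (* regularity: grad_z commutes with the expectation over the z_i, i <> n *)
  (let g := fun (z : 'rV[R]_d) (s : seq 'rV[R]_d) =>
        derive1 (fun t : R => t * Fint p q n (fun _ => t) z s) (q z) in
   forall z : 'rV[R]_d,
     differentiable (fun y => iid_exp mu q K.-1 (g y)) z /\
     grad (fun y => iid_exp mu q K.-1 (g y)) z =
       \row_(j < d) iid_exp mu q K.-1 (fun s => grad (fun y => g y s) z 0 j)) ->
  exists V : 'rV[R]_d -> R,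
    is_first_variation mu (Fn mu p q n) q V /\
    forall z : 'rV[R]_d, differentiable V z /\
      grad V z =
        \row_(j < d) iid_exp mu q K.-1 (fun s =>
          ((p z / q z) / (\sum_(i < K) p (ins n z s i) / q (ins n z s i))) ^+ 2
          * grad (fun y => ln (p y / q y)) z 0 j).
Proof.
move=> _ p_gt0 p_diff _ q_gt0 q_diff first_variation_interchange grad_interchange.
exists (fun z => iid_exp mu q K.-1 (first_variation_integrand n p q z)); split.
- move=> h h_meas h_P2.
  suff -> : (fun z => iid_exp mu q K.-1 (first_variation_integrand n p q z) * h z) =
      fun z => iid_exp mu q K.-1 (fun s => derive1 (fun e =>
        (q z + e * h z) * Fint p q n (fun y => q y + e * h y) z s) 0).
    exact: first_variation_interchange.
  apply/funext => z; rewrite mulrC -iid_expZl; congr iid_exp; apply/funext => s.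
  by rewrite derive1_Fint_line.
- move=> z; have [V_diff ->] := grad_interchange z; split => //.
  apply/rowP => j; rewrite !mxE; apply: eq_iid_exp => s s_size.
  by rewrite /grad !mxE derive_first_variation_integrand.
Qed.
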